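(* Let $\succcurlyeq$ be a preference relation on the set $\mathcal{B}$ of bets over a propositional language $\mathcal{L}$. The following are equivalent: (1) $\succcurlyeq$ satisfies Non-Triviality, Objective Expected Utility and Equivalence; (2) $\succcurlyeq$ is represented by a subjective model of uncertainty $(\Omega,t,\lambda)$ with $t$ exact and $\lambda$ additive; (3) $\succcurlyeq$ is represented by a subjective model of uncertainty $(\Omega',t',\lambda')$ with $t'$ sound.
   Context: Let $\mathbb{P}$ be a set of propositional variables containing two distinguished propositions $\mathbf{T}$ and $\mathbf{F}$, and $\mathcal{L}$ the language generated from $\mathbb{P}$ by $\neg,\land,\lor$. Write $\phi\implies\psi$ if $\psi$ can be deduced from $\phi$ in classical propositional logic (with $\mathbf{T}$ read as true and $\mathbf{F}$ as false), and $\phi\iff\psi$ if $\phi\implies\psi$ and $\psi\implies\phi$. A bet is a finitely supported $b:\mathcal{L}\to[0,1]$ with $\sum_\phi b(\phi)=1$; $b_\phi$ is the bet with $b_\phi(\phi)=1$. The set $\mathcal{B}$ of bets is a mixture space under pointwise mixtures; $\succcurlyeq$ is a relation on $\mathcal{B}$ with parts $\sim,\succ$. A truth valuation on a set $\Omega$ is $t:\mathcal{L}\to 2^\Omega$ with $t(\mathbf{T})=\Omega$, $t(\mathbf{F})=\emptyset$. It is exact if $\phi\iff\psi$ implies $t(\phi)=t(\psi)$; monotone if $\phi\implies\psi$ implies $t(\phi)\subseteq t(\psi)$; symmetric if $t(\neg\phi)=\Omega\setminus t(\phi)$; $\land$-distributive if $t(\phi\land\psi)=t(\phi)\cap t(\psi)$;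 sound if it is exact, monotone, symmetric and $\land$-distributive. A likelihood appraisal on a field $\Sigma\subseteq 2^\Omega$ is $\lambda:\Sigma\to[0,1]$ with $\lambda(\emptyset)=0,\lambda(\Omega)=1$ (no other condition); it is additive if finitely additive on disjoint sets. A subjective model of uncertainty $(\Omega,t,\lambda)$ has $t$ a truth valuation and $\lambda$ a likelihood appraisal on a field containing $t(\mathcal{L})$; it represents $\succcurlyeq$ if $b\succcurlyeq b'$ iff $\sum_\phi b(\phi)\lambda(t(\phi))\ge\sum_\phi b'(\phi)\lambda(t(\phi))$. Axioms: Non-Triviality: $b_{\mathbf{T}}\succcurlyeq b_\phi\succcurlyeq b_{\mathbf{F}}$ for all $\phi$ and $b_{\mathbf{T}}\succ b_{\mathbf{F}}$. Objective Expected Utility: $\succcurlyeq$ is complete, transitive, Archimedean and satisfies Independence. Equivalence: if $\psi\iff\phi$ then $b_\psi\sim b_\phi$. *)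

From Stdlib Require Import Reals List ClassicalEpsilon.
Import ListNotations.
Open Scope R_scope.
Set Implicit Arguments.

Inductive form (P : Type) : Type :=
| Var : P -> form P
| Neg : form P -> form P
| And : form P -> form P -> form P
| Or  : form P -> form P -> form P.
Arguments Var {P}. Arguments Neg {P}. Arguments And {P}. Arguments Or {P}.

Section Lang.
Variables (P : Type) (T F : P).

Fixpoint eval (v : P -> bool) (phi : form P) : bool :=
  match phi with
  | Var p => v p
  | Neg a => negb (eval v a)
  | And a b => andb (eval v a) (eval v b)
  | Or a b => orb (eval v a) (eval v b)
  end.

(** phi ==> psi : psi follows from phi in classical propositional logic,
    with T read as true and F read as false (semantic consequence). *)
Definition entails (phi psi : form P) : Prop :=
  forall v : P -> bool, v T = true -> v F = false ->
    eval v phi = true -> eval v psi = true.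

Definition equivf (phi psi : form P) : Prop := entails phi psi /\ entails psi phi.

Definition sumR (l : list (form P)) (f : form P -> R) : R :=
  fold_right (fun x acc => f x + acc) 0 l.

Definition supported_by (b : form P -> R) (s : list (form P)) : Prop :=
  NoDup s /\ forall phi, b phi <> 0 -> In phi s.

Definition is_bet (b : form P -> R) : Prop :=
  (forall phi, 0 <= b phi <= 1) /\
  exists s, supported_by b s /\ sumR s b = 1.

Definition pbet (phi : form P) : form P -> R :=
  fun psi => if excluded_middle_informative (psi = phi) then 1 else 0.

Definition mix (a : R) (b c : form P -> R) : form P -> R :=
  fun phi => a * b phi + (1 - a) * c phi.

Definition prefrel := (form P -> R) -> (form P -> R) -> Prop.

Definition strict (pref : prefrel) b b' := pref b b' /\ ~ pref b' b.
Definition indiff (pref : prefrel) b b' := pref b b' /\ pref b' b.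

Definition non_triviality (pref : prefrel) : Prop :=
  (forall phi, pref (pbet (Var T)) (pbet phi) /\ pref (pbet phi) (pbet (Var F))) /\
  strict pref (pbet (Var T)) (pbet (Var F)).

Definition complete (pref : prefrel) : Prop :=
  forall b b', is_bet b -> is_bet b' -> pref b b' \/ pref b' b.

Definition transitive (pref : prefrel) : Prop :=
  forall b b' b'', is_bet b -> is_bet b' -> is_bet b'' ->
    pref b b' -> pref b' b'' -> pref b b''.

Definition archimedean (pref : prefrel) : Prop :=
  forall b b' b'', is_bet b -> is_bet b' -> is_bet b'' ->
    strict pref b b' -> strict pref b' b'' ->
    exists a c, 0 < a < 1 /\ 0 < c < 1 /\
      strict pref (mix a b b'') b' /\ strict pref b' (mix c b b'').

Definition independence (pref : prefrel) : Prop :=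
  forall b b' b'' a, is_bet b -> is_bet b' -> is_bet b'' -> 0 < a < 1 ->
    strict pref b b' -> strict pref (mix a b b'') (mix a b' b'').

Definition objective_EU (pref : prefrel) : Prop :=
  complete pref /\ transitive pref /\ archimedean pref /\ independence pref.

Definition equivalence_ax (pref : prefrel) : Prop :=
  forall phi psi, equivf psi phi -> indiff pref (pbet psi) (pbet phi).

Section Model.
Variable Omega : Type.
Definition setT : Omega -> Prop := fun _ => True.
Definition set0 : Omega -> Prop := fun _ => False.

Definition truth_valuation (t : form P -> Omega -> Prop) : Prop :=
  t (Var T) = setT /\ t (Var F) = set0.

Definition exact (t : form P -> Omega -> Prop) : Prop :=
  forall phi psi, equivf phi psi -> t phi = t psi.
Definition monotone (t : form P -> Omega -> Prop) : Prop :=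
  forall phi psi, entails phi psi -> forall w, t phi w -> t psi w.
Definition symmetric (t : form P -> Omega -> Prop) : Prop :=
  forall phi, t (Neg phi) = (fun w => ~ t phi w).
Definition and_distributive (t : form P -> Omega -> Prop) : Prop :=
  forall phi psi, t (And phi psi) = (fun w => t phi w /\ t psi w).
Definition sound (t : form P -> Omega -> Prop) : Prop :=
  exact t /\ monotone t /\ symmetric t /\ and_distributive t.

Definition is_field (Sigma : (Omega -> Prop) -> Prop) : Prop :=
  Sigma setT /\
  (forall A, Sigma A -> Sigma (fun w => ~ A w)) /\
  (forall A B, Sigma A -> Sigma B -> Sigma (fun w => A w \/ B w)).

Definition likelihood_appraisal (Sigma : (Omega -> Prop) -> Prop)
  (lam : (Omega -> Prop) -> R) : Prop :=
  is_field Sigma /\ (forall A, Sigma A -> 0 <= lam A <= 1) /\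
  lam set0 = 0 /\ lam setT = 1.

Definition additive (Sigma : (Omega -> Prop) -> Prop)
  (lam : (Omega -> Prop) -> R) : Prop :=
  forall A B, Sigma A -> Sigma B -> (forall w, ~ (A w /\ B w)) ->
    lam (fun w => A w \/ B w) = lam A + lam B.

Definition subjective_model (t : form P -> Omega -> Prop)
  (Sigma : (Omega -> Prop) -> Prop) (lam : (Omega -> Prop) -> R) : Prop :=
  truth_valuation t /\ likelihood_appraisal Sigma lam /\ (forall phi, Sigma (t phi)).
End Model.

Definition expected (b u : form P -> R) (r : R) : Prop :=
  exists s, supported_by b s /\ r = sumR s (fun phi => b phi * u phi).

Definition represents (pref : prefrel) (u : form P -> R) : Prop :=
  forall b b', is_bet b -> is_bet b' ->
    (pref b b' <-> exists r r', expected b u r /\ expected b' u r' /\ r' <= r).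

End Lang.

(* All three conditions are equivalent to the existence of a utility [u] on formulas with
   [u T = 1], [u F = 0] and values in [0, 1], constant on equivalent formulas, whose expected
   value represents the preference.
   Under the axioms, [u phi] is the weight [a] making [b_phi] indifferent to the reference bet
   [a b_T + (1 - a) b_F]; it is found as a supremum, using the Archimedean axiom. Independence
   extends from strict preference to indifference, so by induction on the support every bet is
   indifferent to the reference bet at its expected utility.
   Conversely, such a [u] yields an exact additive model on [nat], where [t phi] is the set of
   binary digits of [u phi] and [lambda A] is the sum of [2^-(n+1)] over [n] in [A], and a sound
   model on the valuations, where [lambda (t phi) := u phi] is well defined because [t phi]
   determines [phi] up to equivalence. *)

From Stdlib Require Import Reals Lra List Permutation ClassicalEpsilon Classical.
From Stdlib Require Import FunctionalExtensionality PropExtensionality.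
From Coquelicot Require Import Rcomplements Rbar Hierarchy Lim_seq Series.
Import ListNotations.
Open Scope R_scope.

Section Bets.
Context {P : Type}.
Implicit Types (b c u f g : form P -> R) (s : list (form P)) (phi psi : form P).

Lemma sumR_ext_in s f g : (forall x, In x s -> f x = g x) -> sumR s f = sumR s g.
Proof.
  induction s as [|a s IH]; intros Hfg; simpl; [reflexivity|].
  rewrite (Hfg a) by (left; reflexivity).
  rewrite IH by (intros x Hx; apply Hfg; right; exact Hx). reflexivity.
Qed.

Lemma sumR_lin s a a' f g :
  sumR s (fun x => a * f x + a' * g x) = a * sumR s f + a' * sumR s g.
Proof. induction s as [|x s IH]; simpl; [ring|]. rewrite IH. ring. Qed.

Lemma sumR_scal_r s a f : sumR s (fun x => f x * a) = sumR s f * a.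
Proof. induction s as [|x s IH]; simpl; [ring|]. rewrite IH. ring. Qed.

Lemma sumR_le s f g : (forall x, f x <= g x) -> sumR s f <= sumR s g.
Proof. intros Hfg; induction s as [|x s IH]; simpl; [lra|]. specialize (Hfg x). lra. Qed.

Lemma sumR_zero s : sumR s (fun _ => 0) = 0.
Proof. induction s as [|x s IH]; simpl; lra. Qed.

Lemma sumR_nonneg s f : (forall x, 0 <= f x) -> 0 <= sumR s f.
Proof. intros Hf. rewrite <- (sumR_zero s). now apply sumR_le. Qed.

Lemma sumR_ge_term s f x : (forall y, 0 <= f y) -> In x s -> f x <= sumR s f.
Proof.
  intros Hf; induction s as [|y s IH]; simpl; [tauto|]; intros [<-|Hx].
  - pose proof (sumR_nonneg s f Hf). lra.
  - specialize (IH Hx). specialize (Hf y). lra.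
Qed.

Lemma sumR_perm s s' f : Permutation s s' -> sumR s f = sumR s' f.
Proof. induction 1; simpl; lra. Qed.

Lemma sumR_filter_nonzero s f :
  sumR s f = sumR (filter (fun x => if Req_EM_T (f x) 0 then false else true) s) f.
Proof.
  induction s as [|x s IH]; simpl; [reflexivity|].
  destruct Req_EM_T as [E|E]; simpl; rewrite IH; [rewrite E|]; ring.
Qed.

Lemma sumR_support s s' f : NoDup s -> NoDup s' ->
  (forall x, f x <> 0 -> In x s) -> (forall x, f x <> 0 -> In x s') ->
  sumR s f = sumR s' f.
Proof.
  intros Hs Hs' Hsupp Hsupp'.
  rewrite (sumR_filter_nonzero s), (sumR_filter_nonzero s').
  apply sumR_perm, NoDup_Permutation; try (apply NoDup_filter; assumption).
  intros x. rewrite !filter_In.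
  destruct Req_EM_T; split; intros [_ H]; (discriminate || auto).
Qed.

Definition list_union s s' : list (form P) :=
  nodup (fun x y => excluded_middle_informative (x = y)) (s ++ s').

Lemma In_list_union s s' x : In x (list_union s s') <-> In x s \/ In x s'.
Proof. unfold list_union. rewrite nodup_In. apply in_app_iff. Qed.

Lemma supported_by_list_union b s s' :
  (forall x, b x <> 0 -> In x s \/ In x s') -> supported_by b (list_union s s').
Proof. split; [apply NoDup_nodup|]. intros x Hx. apply In_list_union; auto. Qed.

Lemma sumR_supported b s s' g : supported_by b s -> supported_by b s' ->
  (forall x, b x = 0 -> g x = 0) -> sumR s g = sumR s' g.
Proof.
  intros [Hs Hsupp] [Hs' Hsupp'] Hg.
  apply sumR_support; auto.
Qed.

Lemma expected_unique b u r r' : expected b u r -> expected b u r' -> r = r'.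
Proof.
  intros [s [Hs ->]] [s' [Hs' ->]]. apply (sumR_supported b); auto.
  intros x ->; ring.
Qed.

Lemma expected_exists b u : is_bet b -> exists r, expected b u r.
Proof. intros [_ [s [Hs _]]]. eexists; exists s; split; [exact Hs|reflexivity]. Qed.

Lemma supported_by_mix a b c s s' : supported_by b s -> supported_by c s' ->
  supported_by (mix a b c) (list_union s s').
Proof.
  intros [_ Hb] [_ Hc]. apply supported_by_list_union. intros x Hx. unfold mix in Hx.
  destruct (Req_dec (b x) 0) as [E|E]; [right; apply Hc|left; apply Hb; exact E].
  intros E'. apply Hx. rewrite E, E'. ring.
Qed.

Lemma sumR_mix a b c s s' g g' : supported_by b s -> supported_by c s' ->
  (forall x, b x = 0 -> g x = 0) -> (forall x, c x = 0 -> g' x = 0) ->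
  sumR (list_union s s') (fun x => a * g x + (1 - a) * g' x) = a * sumR s g + (1 - a) * sumR s' g'.
Proof.
  intros Hb Hc Hg Hg'. rewrite sumR_lin.
  rewrite (sumR_supported b s (list_union s s') g), (sumR_supported c s' (list_union s s') g');
    auto; apply supported_by_list_union; intros x Hx; [right; apply Hc|left; apply Hb]; exact Hx.
Qed.

Lemma is_bet_mix a b c : 0 <= a <= 1 -> is_bet b -> is_bet c -> is_bet (mix a b c).
Proof.
  intros Ha [Hb [s [Hs Hsum]]] [Hc [s' [Hs' Hsum']]]. split.
  - intros x; unfold mix; specialize (Hb x); specialize (Hc x); nra.
  - exists (list_union s s'). split; [apply supported_by_mix; auto|].
    unfold mix. rewrite (sumR_mix a b c s s' b c); auto. rewrite Hsum, Hsum'. ring.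
Qed.

Lemma expected_mix a b c u r r' : expected b u r -> expected c u r' ->
  expected (mix a b c) u (a * r + (1 - a) * r').
Proof.
  intros [s [Hs ->]] [s' [Hs' ->]]. exists (list_union s s').
  split; [apply supported_by_mix; auto|].
  rewrite <- (sumR_mix a b c s s'); auto; [|intros x ->; ring ..].
  apply sumR_ext_in. intros x _. unfold mix. ring.
Qed.

Lemma pbet_self phi : pbet phi phi = 1.
Proof. unfold pbet; destruct excluded_middle_informative; congruence. Qed.

Lemma pbet_other phi psi : psi <> phi -> pbet phi psi = 0.
Proof. unfold pbet; destruct excluded_middle_informative; congruence. Qed.

Lemma supported_by_pbet phi : supported_by (pbet phi) [phi].
Proof.
  split; [repeat constructor; simpl; tauto|].
  intros x Hx. left. apply NNPP. intros Hne. apply Hx, pbet_other. auto.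
Qed.

Lemma is_bet_pbet phi : is_bet (pbet phi).
Proof.
  split.
  - intros x; unfold pbet; destruct excluded_middle_informative; lra.
  - exists [phi]. split; [apply supported_by_pbet|]. simpl. rewrite pbet_self. ring.
Qed.

Lemma expected_pbet phi u : expected (pbet phi) u (u phi).
Proof. exists [phi]. split; [apply supported_by_pbet|]. simpl. rewrite pbet_self. ring. Qed.

Lemma sumR_weighted_range s b u : (forall x, 0 <= b x) -> (forall x, 0 <= u x <= 1) ->
  sumR s b = 1 -> 0 <= sumR s (fun x => b x * u x) <= 1.
Proof.
  intros Hb Hu Hsum. split.
  - apply sumR_nonneg. intros x; specialize (Hb x); specialize (Hu x); nra.
  - rewrite <- Hsum. apply sumR_le. intros x; specialize (Hb x); specialize (Hu x); nra.
Qed.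

Lemma bet_head_concentrated b phi0 s : (forall x, 0 <= b x) ->
  (forall x, b x <> 0 -> In x (phi0 :: s)) -> sumR (phi0 :: s) b = 1 -> b phi0 = 1 ->
  b = pbet phi0 /\ forall u, sumR s (fun x => b x * u x) = 0.
Proof.
  intros Hb Hsupp Hsum Hphi0. simpl in Hsum.
  assert (Hzero : forall x, In x s -> b x = 0).
  { intros x Hx. pose proof (sumR_ge_term s b x Hb Hx). specialize (Hb x). lra. }
  split.
  - apply functional_extensionality. intros x. unfold pbet.
    destruct excluded_middle_informative as [->|Hne]; [exact Hphi0|].
    destruct (Req_dec (b x) 0) as [E|E]; [exact E|].
    destruct (Hsupp x E) as [<-|Hx]; [contradiction|auto].
  - intros u. rewrite <- (sumR_zero s).
    apply sumR_ext_in. intros x Hx. rewrite Hzero by exact Hx. ring.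
Qed.

Lemma bet_split_head b phi0 s : (forall x, 0 <= b x) -> ~ In phi0 s ->
  (forall x, b x <> 0 -> In x (phi0 :: s)) -> sumR (phi0 :: s) b = 1 -> b phi0 < 1 ->
  exists b', (forall x, 0 <= b' x) /\ (forall x, b' x <> 0 -> In x s) /\ sumR s b' = 1 /\
    b = mix (b phi0) (pbet phi0) b' /\
    forall u, sumR s (fun x => b x * u x) = (1 - b phi0) * sumR s (fun x => b' x * u x).
Proof.
  intros Hb Hphi0 Hsupp Hsum Hlt. simpl in Hsum. set (p := b phi0) in *.
  set (b' := fun x => if excluded_middle_informative (x = phi0) then 0 else b x / (1 - p)).
  assert (Hb'_in : forall x, In x s -> b x = (1 - p) * b' x).
  { intros x Hx. unfold b'. destruct excluded_middle_informative as [->|_]; [contradiction|field; lra]. }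
  exists b'. split; [|split; [|split; [|split]]].
  - intros x. unfold b'. destruct excluded_middle_informative; [lra|].
    apply Rdiv_le_0_compat; [apply Hb|lra].
  - intros x Hx. unfold b' in Hx. destruct excluded_middle_informative as [_|Hne]; [lra|].
    destruct (Hsupp x) as [<-|Hin]; auto; [|contradiction].
    intros E. apply Hx. rewrite E. unfold Rdiv. ring.
  - assert (E : sumR s b = sumR s (fun x => b' x * (1 - p)))
      by (apply sumR_ext_in; intros x Hx; rewrite Hb'_in by exact Hx; ring).
    rewrite sumR_scal_r in E. apply (Rmult_eq_reg_r (1 - p)); lra.
  - apply functional_extensionality. intros x. unfold mix, pbet, b'.
    destruct excluded_middle_informative as [->|Hne]; [fold p; ring|field; lra].
  - intros u. rewrite Rmult_comm, <- sumR_scal_r. apply sumR_ext_in. intros x Hx.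
    rewrite Hb'_in by exact Hx. ring.
Qed.

End Bets.

Ltac mix_ext := apply functional_extensionality; intros ?; unfold mix; field; try lra.

Section MixtureAlgebra.
Context {P : Type}.
Implicit Types (x y z : form P -> R).

Lemma mix_id a x : mix a x x = x.
Proof. mix_ext. Qed.

Lemma mix_1 x y : mix 1 x y = x.
Proof. mix_ext. Qed.

Lemma mix_0 x y : mix 0 x y = y.
Proof. mix_ext. Qed.

Lemma mix_comm a x y : mix a x y = mix (1 - a) y x.
Proof. mix_ext. Qed.

Lemma mix_mix p a c x y : mix p (mix a x y) (mix c x y) = mix (p * a + (1 - p) * c) x y.
Proof. mix_ext. Qed.

End MixtureAlgebra.

Record utility_representation {P : Type} (T F : P) (pref : prefrel P) (u : form P -> R) : Prop := {
  utility_T : u (Var T) = 1;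
  utility_F : u (Var F) = 0;
  utility_range : forall phi, 0 <= u phi <= 1;
  utility_equiv : forall phi psi, equivf T F phi psi -> u phi = u psi;
  utility_represents : represents pref u }.

Section Indifference.
Context {P : Type} (pref : prefrel P).
Hypotheses (Hcomplete : complete pref) (Htrans : transitive pref)
  (Harch : archimedean pref) (Hindep : independence pref).
Implicit Types (x y z : form P -> R).

Lemma pref_refl x : is_bet x -> pref x x.
Proof. intros Hx; destruct (Hcomplete x x Hx Hx); auto. Qed.

Lemma strict_pref_trans x y z : is_bet x -> is_bet y -> is_bet z ->
  strict pref x y -> pref y z -> strict pref x z.
Proof.
  intros Hx Hy Hz [Hxy Hyx] Hyz. split; [exact (Htrans x y z Hx Hy Hz Hxy Hyz)|].
  intros Hzx. exact (Hyx (Htrans y z x Hy Hz Hx Hyz Hzx)).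
Qed.

Lemma pref_strict_trans x y z : is_bet x -> is_bet y -> is_bet z ->
  pref x y -> strict pref y z -> strict pref x z.
Proof.
  intros Hx Hy Hz Hxy [Hyz Hzy]. split; [exact (Htrans x y z Hx Hy Hz Hxy Hyz)|].
  intros Hzx. exact (Hzy (Htrans z x y Hz Hx Hy Hzx Hxy)).
Qed.

Lemma strict_asym x y : strict pref x y -> ~ strict pref y x.
Proof. intros [_ Hyx] [Hyx' _]. exact (Hyx Hyx'). Qed.

Lemma indiff_of_not_strict x y : is_bet x -> is_bet y ->
  ~ strict pref x y -> ~ strict pref y x -> indiff pref x y.
Proof.
  intros Hx Hy Hxy Hyx. unfold strict in *.
  destruct (Hcomplete x y Hx Hy); split; auto; apply NNPP; tauto.
Qed.

Lemma indiff_trans x y z : is_bet x -> is_bet y -> is_bet z ->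
  indiff pref x y -> indiff pref y z -> indiff pref x z.
Proof.
  intros Hx Hy Hz [Hxy Hyx] [Hyz Hzy].
  split; [exact (Htrans x y z Hx Hy Hz Hxy Hyz)|exact (Htrans z y x Hz Hy Hx Hzy Hyx)].
Qed.

Lemma indiff_sym x y : indiff pref x y -> indiff pref y x.
Proof. intros []; split; auto. Qed.

Lemma strict_mix_l mu x z : is_bet x -> is_bet z -> 0 < mu < 1 ->
  strict pref x z -> strict pref (mix mu x z) z.
Proof.
  intros Hx Hz Hmu Hxz. rewrite <- (mix_id mu z) at 2.
  exact (Hindep x z z mu Hx Hz Hz Hmu Hxz).
Qed.

Lemma strict_mix_r mu x z : is_bet x -> is_bet z -> 0 < mu < 1 ->
  strict pref z x -> strict pref z (mix mu x z).
Proof.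
  intros Hx Hz Hmu Hzx. rewrite <- (mix_id mu z) at 1.
  exact (Hindep z x z mu Hz Hx Hz Hmu Hzx).
Qed.

Lemma mix_indiff_self mu x z : is_bet x -> is_bet z -> 0 < mu < 1 ->
  indiff pref x z -> indiff pref (mix mu x z) x.
Proof.
  intros Hx Hz Hmu [Hxz Hzx].
  assert (Hw : is_bet (mix mu x z)) by (apply is_bet_mix; auto; lra).
  assert (Hmix2 : mix (1 - mu) z (mix mu x z) = mix mu (mix mu x z) z) by mix_ext.
  apply indiff_of_not_strict; auto; intros Hs.
  - pose proof (Hindep _ _ z mu Hw Hx Hz Hmu Hs) as Hlow.
    pose proof (strict_mix_r (1 - mu) z (mix mu x z) Hz Hw ltac:(lra)
                  (strict_pref_trans _ _ _ Hw Hx Hz Hs Hxz)) as Hhigh.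
    rewrite Hmix2 in Hhigh. exact (strict_asym _ _ Hlow Hhigh).
  - pose proof (Hindep _ _ z mu Hx Hw Hz Hmu Hs) as Hhigh.
    pose proof (strict_mix_l (1 - mu) z (mix mu x z) Hz Hw ltac:(lra)
                  (pref_strict_trans _ _ _ Hz Hx Hw Hzx Hs)) as Hlow.
    rewrite Hmix2 in Hlow. exact (strict_asym _ _ Hlow Hhigh).
Qed.

Lemma mix_indiff_not_strict_above mu x y z : is_bet x -> is_bet y -> is_bet z -> 0 < mu < 1 ->
  indiff pref x y -> strict pref z x -> ~ strict pref (mix mu x z) (mix mu y z).
Proof.
  intros Hx Hy Hz Hmu [Hxy Hyx] Hzx Hs.
  assert (Hfx : is_bet (mix mu x z)) by (apply is_bet_mix; auto; lra).
  assert (Hfy : is_bet (mix mu y z)) by (apply is_bet_mix; auto; lra).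
  destruct (Harch _ _ _ Hz Hfx Hfy (strict_mix_r mu x z Hx Hz Hmu Hzx) Hs)
    as [a [c [Ha [Hc [_ Hbelow]]]]].
  replace (mix c z (mix mu y z)) with (mix ((1 - c) * mu) y z) in Hbelow by mix_ext.
  assert (Hczy : is_bet (mix c z y)) by (apply is_bet_mix; auto; lra).
  assert (Hczy_x : strict pref (mix c z y) x).
  { apply (strict_pref_trans _ y); auto.
    apply strict_mix_l; auto. exact (strict_pref_trans _ _ _ Hz Hx Hy Hzx Hxy). }
  pose proof (Hindep _ _ z mu Hczy Hx Hz Hmu Hczy_x) as Habove.
  replace (mix mu (mix c z y) z) with (mix ((1 - c) * mu) y z) in Habove by mix_ext.
  exact (strict_asym _ _ Hbelow Habove).
Qed.

Lemma mix_indiff_not_strict_below mu x y z : is_bet x -> is_bet y -> is_bet z -> 0 < mu < 1 ->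
  indiff pref x y -> strict pref x z -> ~ strict pref (mix mu x z) (mix mu y z).
Proof.
  intros Hx Hy Hz Hmu [Hxy Hyx] Hxz Hs.
  assert (Hfx : is_bet (mix mu x z)) by (apply is_bet_mix; auto; lra).
  assert (Hfy : is_bet (mix mu y z)) by (apply is_bet_mix; auto; lra).
  assert (Hyz : strict pref y z) by exact (pref_strict_trans _ _ _ Hy Hx Hz Hyx Hxz).
  destruct (Harch _ _ _ Hfx Hfy Hz Hs (strict_mix_l mu y z Hy Hz Hmu Hyz))
    as [a [c [Ha [Hc [Habove _]]]]].
  replace (mix a (mix mu x z) z) with (mix (a * mu) x z) in Habove by mix_ext.
  assert (Haxz : is_bet (mix a x z)) by (apply is_bet_mix; auto; lra).
  assert (Hy_axz : strict pref y (mix a x z)).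
  { apply (pref_strict_trans _ x); auto.
    rewrite mix_comm. apply strict_mix_r; auto; lra. }
  pose proof (Hindep _ _ z mu Hy Haxz Hz Hmu Hy_axz) as Hbelow.
  replace (mix mu (mix a x z) z) with (mix (a * mu) x z) in Hbelow by mix_ext.
  exact (strict_asym _ _ Habove Hbelow).
Qed.

Lemma indiff_mix mu x y z : is_bet x -> is_bet y -> is_bet z -> 0 <= mu <= 1 ->
  indiff pref x y -> indiff pref (mix mu x z) (mix mu y z).
Proof.
  intros Hx Hy Hz Hmu Hxy.
  destruct (Req_dec mu 0) as [->|Hmu0].
  { rewrite !mix_0. split; apply pref_refl; auto. }
  destruct (Req_dec mu 1) as [->|Hmu1].
  { rewrite !mix_1. exact Hxy. }
  assert (Hmu' : 0 < mu < 1) by lra.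
  assert (Hfx : is_bet (mix mu x z)) by (apply is_bet_mix; auto; lra).
  assert (Hfy : is_bet (mix mu y z)) by (apply is_bet_mix; auto; lra).
  pose proof (indiff_sym _ _ Hxy) as Hyx.
  destruct (classic (pref z x)) as [Hzx|Hzx]; destruct (classic (pref x z)) as [Hxz|Hxz].
  - assert (Ixz : indiff pref x z) by (split; auto).
    assert (Iyz : indiff pref y z) by exact (indiff_trans _ _ _ Hy Hx Hz Hyx Ixz).
    apply (indiff_trans _ x); auto; [exact (mix_indiff_self mu x z Hx Hz Hmu' Ixz)|].
    apply (indiff_trans _ y); auto. apply indiff_sym, mix_indiff_self; auto.
  - assert (Szx : strict pref z x) by (split; auto).
    assert (Szy : strict pref z y) by exact (strict_pref_trans _ _ _ Hz Hx Hy Szx (proj1 Hxy)).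
    apply indiff_of_not_strict; auto; apply mix_indiff_not_strict_above; auto.
  - assert (Sxz : strict pref x z) by (split; auto).
    assert (Syz : strict pref y z) by exact (pref_strict_trans _ _ _ Hy Hx Hz (proj1 Hyx) Sxz).
    apply indiff_of_not_strict; auto; apply mix_indiff_not_strict_below; auto.
  - exfalso. destruct (Hcomplete x z Hx Hz); tauto.
Qed.

Section Calibration.
Context (T F : P).
Hypothesis Hnt : non_triviality T F pref.

Definition ref_bet (a : R) : form P -> R := mix a (pbet (Var T)) (pbet (Var F)).

Lemma is_bet_ref_bet a : 0 <= a <= 1 -> is_bet (ref_bet a).
Proof. intros Ha. apply is_bet_mix; auto using is_bet_pbet. Qed.

Lemma ref_bet_1 : ref_bet 1 = pbet (Var T).
Proof. apply mix_1. Qed.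

Lemma ref_bet_0 : ref_bet 0 = pbet (Var F).
Proof. apply mix_0. Qed.

Lemma mix_ref_bet p a c : mix p (ref_bet a) (ref_bet c) = ref_bet (p * a + (1 - p) * c).
Proof. apply mix_mix. Qed.

Lemma ref_bet_strict_mono a c : 0 <= c < a -> a <= 1 -> strict pref (ref_bet a) (ref_bet c).
Proof.
  intros Hca Ha.
  assert (Ha0 : strict pref (ref_bet a) (ref_bet 0)).
  { rewrite ref_bet_0. destruct (Req_dec a 1) as [->|Ha1].
    - rewrite ref_bet_1. exact (proj2 Hnt).
    - apply strict_mix_l; auto using is_bet_pbet; [lra|exact (proj2 Hnt)]. }
  destruct (Req_dec c 0) as [->|Hc0]; [exact Ha0|].
  replace (ref_bet c) with (mix (1 - c / a) (ref_bet 0) (ref_bet a))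
    by (rewrite mix_ref_bet; f_equal; field; lra).
  assert (Hca' : 0 < c / a < 1).
  { split; [apply Rdiv_lt_0_compat; lra|apply (Rdiv_lt_1 c a); lra]. }
  apply strict_mix_r; [apply is_bet_ref_bet; lra ..|lra|exact Ha0].
Qed.

Lemma ref_bet_pref_mono a c : 0 <= c <= a -> a <= 1 -> pref (ref_bet a) (ref_bet c).
Proof.
  intros Hca Ha. destruct (Req_dec a c) as [->|Hne].
  - apply pref_refl; auto. apply is_bet_ref_bet; lra.
  - apply ref_bet_strict_mono; lra.
Qed.

Lemma ref_bet_indiff_inj a c : 0 <= a <= 1 -> 0 <= c <= 1 ->
  indiff pref (ref_bet a) (ref_bet c) -> a = c.
Proof.
  intros Ha Hc [Hac Hca]. destruct (Rtotal_order a c) as [Hlt|[Heq|Hgt]]; auto; exfalso.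
  - exact (proj2 (ref_bet_strict_mono c a ltac:(lra) ltac:(lra)) Hac).
  - exact (proj2 (ref_bet_strict_mono a c ltac:(lra) ltac:(lra)) Hca).
Qed.

Section Supremum.
Variables (b : form P -> R) (m : R).
Hypotheses (Hb : is_bet b) (HTb : strict pref (pbet (Var T)) b)
  (HbF : strict pref b (pbet (Var F)))
  (Hm : is_lub (fun a => 0 <= a <= 1 /\ strict pref b (ref_bet a)) m).

Lemma calibration_sup_range : 0 <= m <= 1.
Proof.
  destruct Hm as [Hub Hlub]. split.
  - apply Hub. split; [lra|]. rewrite ref_bet_0. exact HbF.
  - apply Hlub. intros a [Ha _]. lra.
Qed.

Lemma calibration_sup_not_below : ~ strict pref b (ref_bet m).
Proof.
  intros Hs. pose proof calibration_sup_range as Hm01.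
  assert (Hm1 : m < 1).
  { destruct (Req_dec m 1) as [E|E]; [|lra].
    rewrite E, ref_bet_1 in Hs. exfalso. exact (strict_asym _ _ Hs HTb). }
  destruct (Harch _ _ _ (is_bet_pbet _) Hb (is_bet_ref_bet m Hm01) HTb Hs)
    as [a [c [Ha [Hc [_ Hbelow]]]]].
  rewrite <- ref_bet_1, mix_ref_bet in Hbelow.
  assert (Hup : c * 1 + (1 - c) * m <= m) by (apply (proj1 Hm); split; [nra|exact Hbelow]).
  nra.
Qed.

Lemma calibration_sup_not_above : ~ strict pref (ref_bet m) b.
Proof.
  intros Hs. pose proof calibration_sup_range as Hm01.
  assert (Hm0 : 0 < m).
  { destruct (Req_dec m 0) as [E|E]; [|lra].
    rewrite E, ref_bet_0 in Hs. exfalso. exact (strict_asym _ _ Hs HbF). }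
  rewrite <- ref_bet_0 in HbF.
  destruct (Harch _ _ _ (is_bet_ref_bet m Hm01) Hb (is_bet_ref_bet 0 ltac:(lra)) Hs HbF)
    as [a [c [Ha [Hc [Habove _]]]]].
  rewrite mix_ref_bet in Habove. replace (a * m + (1 - a) * 0) with (a * m) in Habove by ring.
  assert (Hex : exists e, (0 <= e <= 1 /\ strict pref b (ref_bet e)) /\ a * m < e).
  { apply NNPP. intros Hno. assert (m <= a * m); [|nra].
    apply (proj2 Hm). intros e He. apply Rnot_lt_le. intros Hlt. apply Hno. eauto. }
  destruct Hex as [e [[He Hbe] Hame]].
  pose proof (ref_bet_strict_mono e (a * m) ltac:(nra) ltac:(lra)) as Hea.
  apply (strict_asym _ _ Hbe).
  apply (strict_pref_trans _ (ref_bet (a * m))); auto using is_bet_ref_bet.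
  - apply is_bet_ref_bet; nra.
  - exact (proj1 Habove).
Qed.

End Supremum.

Lemma ref_bet_calibration b : is_bet b -> pref (pbet (Var T)) b -> pref b (pbet (Var F)) ->
  exists a, 0 <= a <= 1 /\ indiff pref b (ref_bet a).
Proof.
  intros Hb HTb HbF.
  destruct (classic (pref b (pbet (Var T)))) as [HbT|HbT].
  { exists 1. rewrite ref_bet_1. split; [lra|split; auto]. }
  destruct (classic (pref (pbet (Var F)) b)) as [HFb|HFb].
  { exists 0. rewrite ref_bet_0. split; [lra|split; auto]. }
  assert (STb : strict pref (pbet (Var T)) b) by (split; auto).
  assert (SbF : strict pref b (pbet (Var F))) by (split; auto).
  set (E := fun a => 0 <= a <= 1 /\ strict pref b (ref_bet a)).
  destruct (completeness E) as [m Hm].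
  - exists 1. intros a [Ha _]. lra.
  - exists 0. split; [lra|]. rewrite ref_bet_0. exact SbF.
  - pose proof (calibration_sup_range b m SbF Hm) as Hm01.
    exists m. split; [exact Hm01|].
    apply indiff_of_not_strict; auto using is_bet_ref_bet.
    + exact (calibration_sup_not_below b m Hb STb SbF Hm).
    + exact (calibration_sup_not_above b m Hb SbF Hm).
Qed.

Lemma pbet_calibration phi : exists a, 0 <= a <= 1 /\ indiff pref (pbet phi) (ref_bet a).
Proof. apply ref_bet_calibration; [apply is_bet_pbet|apply (proj1 Hnt phi)..]. Qed.

Definition calibrated_utility (phi : form P) : R :=
  proj1_sig (constructive_indefinite_description _ (pbet_calibration phi)).

Lemma calibrated_utility_spec phi :
  0 <= calibrated_utility phi <= 1 /\ indiff pref (pbet phi) (ref_bet (calibrated_utility phi)).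
Proof. unfold calibrated_utility. destruct constructive_indefinite_description; auto. Qed.

Lemma calibrated_utility_range phi : 0 <= calibrated_utility phi <= 1.
Proof. apply calibrated_utility_spec. Qed.

Lemma indiff_ref_bet_expected (s : list (form P)) : forall b, (forall phi, 0 <= b phi) ->
  NoDup s -> (forall phi, b phi <> 0 -> In phi s) -> sumR s b = 1 ->
  indiff pref b (ref_bet (sumR s (fun phi => b phi * calibrated_utility phi))).
Proof.
  induction s as [|phi0 s IH]; intros b Hb Hs Hsupp Hsum; [simpl in Hsum; lra|].
  apply NoDup_cons_iff in Hs as [Hphi0 Hs].
  set (u := calibrated_utility) in *.
  destruct (calibrated_utility_spec phi0) as [Hu0 Hindiff0]. fold u in Hu0, Hindiff0.
  simpl. destruct (Req_dec (b phi0) 1) as [Hp1|Hp1].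
  { destruct (bet_head_concentrated b phi0 s Hb Hsupp Hsum Hp1) as [-> Hrest].
    rewrite Hrest, pbet_self. replace (1 * u phi0 + 0) with (u phi0) by ring. exact Hindiff0. }
  assert (Hp : 0 <= b phi0 < 1).
  { pose proof (sumR_ge_term (phi0 :: s) b phi0 Hb (in_eq phi0 s)). split; [apply Hb|lra]. }
  destruct (bet_split_head b phi0 s Hb Hphi0 Hsupp Hsum ltac:(lra))
    as [b' [Hb' [Hsupp' [Hsum' [Hsplit Hexp]]]]].
  set (p := b phi0) in *.
  assert (Hbet' : is_bet b').
  { split; [|exists s; repeat split; auto].
    intros phi. split; [apply Hb'|]. destruct (Req_dec (b' phi) 0) as [->|Hphi]; [lra|].
    rewrite <- Hsum'. apply sumR_ge_term; auto. }
  set (e' := sumR s (fun phi => b' phi * u phi)) in *.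
  assert (He' : 0 <= e' <= 1) by (apply sumR_weighted_range; auto using calibrated_utility_range).
  specialize (IH b' Hb' Hs Hsupp' Hsum'). fold u e' in IH.
  rewrite Hexp. fold e'. rewrite Hsplit at 1.
  assert (Hmixed : indiff pref (mix p (ref_bet (u phi0)) b') (ref_bet (p * u phi0 + (1 - p) * e'))).
  { rewrite mix_comm.
    replace (ref_bet (p * u phi0 + (1 - p) * e')) with (mix (1 - p) (ref_bet e') (ref_bet (u phi0)))
      by (rewrite mix_ref_bet; f_equal; ring).
    apply indiff_mix; auto using is_bet_ref_bet; lra. }
  apply (indiff_trans _ (mix p (ref_bet (u phi0)) b'));
    [apply is_bet_mix; auto using is_bet_pbet, is_bet_ref_bet; lra ..
    |apply is_bet_ref_bet; split; nra| |exact Hmixed].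
  apply indiff_mix; auto using is_bet_pbet, is_bet_ref_bet; lra.
Qed.

Lemma bet_indiff_ref_bet b : is_bet b ->
  exists r, expected b calibrated_utility r /\ 0 <= r <= 1 /\ indiff pref b (ref_bet r).
Proof.
  intros [Hb [s [[Hs Hsupp] Hsum]]].
  exists (sumR s (fun phi => b phi * calibrated_utility phi)). split; [|split].
  - exists s. repeat split; auto.
  - apply sumR_weighted_range; auto using calibrated_utility_range. apply Hb.
  - apply indiff_ref_bet_expected; auto. apply Hb.
Qed.

Lemma calibrated_utility_represents : represents pref calibrated_utility.
Proof.
  intros b b' Hb Hb'.
  destruct (bet_indiff_ref_bet b Hb) as [r [Hr [Hr01 [Hbr Hrb]]]].
  destruct (bet_indiff_ref_bet b' Hb') as [r' [Hr' [Hr01' [Hbr' Hrb']]]].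
  split.
  - intros Hbb'. exists r, r'. repeat split; auto. apply Rnot_lt_le. intros Hlt.
    assert (Hb'b : strict pref b' b).
    { apply (pref_strict_trans _ (ref_bet r')); auto using is_bet_ref_bet.
      apply (strict_pref_trans _ (ref_bet r)); auto using is_bet_ref_bet.
      apply ref_bet_strict_mono; lra. }
    exact (proj2 Hb'b Hbb').
  - intros [r0 [r0' [Hr0 [Hr0' Hle]]]].
    rewrite <- (expected_unique _ _ _ _ Hr Hr0), <- (expected_unique _ _ _ _ Hr' Hr0') in Hle.
    apply (Htrans _ (ref_bet r)); auto using is_bet_ref_bet.
    apply (Htrans _ (ref_bet r')); auto using is_bet_ref_bet.
    apply ref_bet_pref_mono; lra.
Qed.

Lemma calibrated_utility_of_indiff phi a : 0 <= a <= 1 ->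
  indiff pref (pbet phi) (ref_bet a) -> calibrated_utility phi = a.
Proof.
  intros Ha Hphi. destruct (calibrated_utility_spec phi) as [Hu Hu_indiff].
  apply ref_bet_indiff_inj; auto.
  apply (indiff_trans _ (pbet phi)); auto using is_bet_ref_bet, is_bet_pbet, indiff_sym.
Qed.

Lemma calibrated_utility_representation :
  equivalence_ax T F pref -> utility_representation T F pref calibrated_utility.
Proof.
  intros Hequiv. split.
  - apply calibrated_utility_of_indiff; [lra|]. rewrite ref_bet_1.
    split; apply pref_refl, is_bet_pbet.
  - apply calibrated_utility_of_indiff; [lra|]. rewrite ref_bet_0.
    split; apply pref_refl, is_bet_pbet.
  - exact calibrated_utility_range.
  - intros phi psi Hphipsi. apply calibrated_utility_of_indiff; [apply calibrated_utility_range|].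
    apply (indiff_trans _ (pbet psi));
      [apply is_bet_pbet ..|apply is_bet_ref_bet, calibrated_utility_range
      |exact (Hequiv psi phi Hphipsi)|apply calibrated_utility_spec].
  - exact calibrated_utility_represents.
Qed.

End Calibration.

End Indifference.

Lemma axioms_utility_representation {P : Type} (T F : P) (pref : prefrel P) :
  non_triviality T F pref /\ objective_EU pref /\ equivalence_ax T F pref ->
  exists u, utility_representation T F pref u.
Proof.
  intros [Hnt [[Hcomplete [Htrans [Harch Hindep]]] Hequiv]].
  eexists. exact (calibrated_utility_representation pref Hcomplete Htrans Harch Hindep T F Hnt Hequiv).
Qed.

Section RepresentedPreference.
Context {P : Type} (pref : prefrel P) (u : form P -> R).
Hypothesis Hrep : represents pref u.
Implicit Types (b c : form P -> R).

Lemma pref_iff_expected b c r r' : is_bet b -> is_bet c ->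
  expected b u r -> expected c u r' -> (pref b c <-> r' <= r).
Proof.
  intros Hb Hc Hr Hr'. rewrite (Hrep b c Hb Hc). split.
  - intros [r0 [r0' [Hr0 [Hr0' Hle]]]].
    rewrite (expected_unique _ _ _ _ Hr Hr0), (expected_unique _ _ _ _ Hr' Hr0'). exact Hle.
  - intros Hle. exists r, r'. auto.
Qed.

Lemma strict_iff_expected b c r r' : is_bet b -> is_bet c ->
  expected b u r -> expected c u r' -> (strict pref b c <-> r' < r).
Proof.
  intros Hb Hc Hr Hr'. unfold strict.
  rewrite (pref_iff_expected b c r r'), (pref_iff_expected c b r' r); auto. lra.
Qed.

Lemma represented_complete : complete pref.
Proof.
  intros b c Hb Hc.
  destruct (expected_exists b u Hb) as [r Hr], (expected_exists c u Hc) as [r' Hr'].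
  rewrite (pref_iff_expected b c r r'), (pref_iff_expected c b r' r); auto. lra.
Qed.

Lemma represented_transitive : transitive pref.
Proof.
  intros b c d Hb Hc Hd.
  destruct (expected_exists b u Hb) as [r Hr], (expected_exists c u Hc) as [r' Hr'],
    (expected_exists d u Hd) as [r'' Hr''].
  rewrite (pref_iff_expected b c r r'), (pref_iff_expected c d r' r''),
    (pref_iff_expected b d r r''); auto. lra.
Qed.

Lemma represented_archimedean : archimedean pref.
Proof.
  intros b c d Hb Hc Hd.
  destruct (expected_exists b u Hb) as [r Hr], (expected_exists c u Hc) as [r' Hr'],
    (expected_exists d u Hd) as [r'' Hr''].
  rewrite (strict_iff_expected b c r r'), (strict_iff_expected c d r' r''); auto.
  intros Hcb Hdc.
  (* [th] is the weight at which [mix th b d] has exactly the expected utility of [c] *)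
  set (th := (r' - r'') / (r - r'')).
  assert (Hth : th * (r - r'') = r' - r'') by (unfold th; field; lra).
  assert (Hth01 : 0 < th < 1).
  { unfold th. split; [apply Rdiv_lt_0_compat|apply (Rdiv_lt_1 (r' - r'') (r - r''))]; lra. }
  exists ((th + 1) / 2), (th / 2). split; [lra|]. split; [lra|]. split.
  - rewrite (strict_iff_expected _ c ((th + 1) / 2 * r + (1 - (th + 1) / 2) * r'') r');
      [nra|apply is_bet_mix; auto; lra|auto|apply expected_mix; auto|auto].
  - rewrite (strict_iff_expected c _ r' (th / 2 * r + (1 - th / 2) * r''));
      [nra|auto|apply is_bet_mix; auto; lra|auto|apply expected_mix; auto].
Qed.

Lemma represented_independence : independence pref.
Proof.
  intros b c d a Hb Hc Hd Ha.
  destruct (expected_exists b u Hb) as [r Hr], (expected_exists c u Hc) as [r' Hr'],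
    (expected_exists d u Hd) as [r'' Hr''].
  rewrite (strict_iff_expected b c r r'); auto. intros Hlt.
  rewrite (strict_iff_expected _ _ (a * r + (1 - a) * r'') (a * r' + (1 - a) * r''));
    [nra|apply is_bet_mix; auto; lra|apply is_bet_mix; auto; lra
    |apply expected_mix; auto|apply expected_mix; auto].
Qed.

Lemma represented_objective_EU : objective_EU pref.
Proof.
  split; [|split; [|split]].
  - exact represented_complete.
  - exact represented_transitive.
  - exact represented_archimedean.
  - exact represented_independence.
Qed.

Lemma pref_pbet_iff phi psi : pref (pbet phi) (pbet psi) <-> u psi <= u phi.
Proof. apply pref_iff_expected; auto using is_bet_pbet, expected_pbet. Qed.

End RepresentedPreference.

Lemma utility_representation_axioms {P : Type} (T F : P) (pref : prefrel P) u :
  utility_representation T F pref u ->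
  non_triviality T F pref /\ objective_EU pref /\ equivalence_ax T F pref.
Proof.
  intros [HT HF Hrange Hequiv Hrep].
  split; [|split; [exact (represented_objective_EU pref u Hrep)|]].
  - split.
    + intros phi. rewrite !(pref_pbet_iff pref u Hrep), HT, HF. specialize (Hrange phi). lra.
    + unfold strict. rewrite !(pref_pbet_iff pref u Hrep), HT, HF. lra.
  - intros phi psi Hpsiphi. unfold indiff. rewrite !(pref_pbet_iff pref u Hrep).
    rewrite (Hequiv psi phi Hpsiphi). lra.
Qed.

Section DyadicMass.

Definition dyadic_weight (A : nat -> Prop) (n : nat) : R :=
  if excluded_middle_informative (A n) then (1/2)^(S n) else 0.

Definition dyadic_mass (A : nat -> Prop) : R := Series (dyadic_weight A).

Lemma half_pow_pos n : 0 < (1/2)^n.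
Proof. apply pow_lt; lra. Qed.

Lemma is_series_half_pow : is_series (fun n => (1/2)^(S n)) 1.
Proof.
  pose proof (is_series_scal_l (1/2) _ _ (is_series_geom (1/2) ltac:(rewrite Rabs_pos_eq; lra)))
    as Hgeom.
  match type of Hgeom with is_series _ ?l =>
    replace l with 1 in Hgeom by (unfold scal; simpl; unfold mult; simpl; field) end.
  exact Hgeom.
Qed.

Lemma ex_series_dyadic_weight A : ex_series (dyadic_weight A).
Proof.
  apply (@ex_series_le R_AbsRing R_CompleteNormedModule _ (fun n => (1/2)^(S n)));
    [|exists 1; exact is_series_half_pow].
  intros n. unfold dyadic_weight, norm; simpl; unfold abs; simpl.
  pose proof (half_pow_pos n).
  destruct excluded_middle_informative; rewrite ?Rabs_R0, ?Rabs_pos_eq; lra.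
Qed.

Lemma dyadic_mass_empty : dyadic_mass (fun _ => False) = 0.
Proof.
  unfold dyadic_mass. rewrite (Series_ext _ (fun n => 0 * (1/2)^n)), Series_scal_l; [ring|].
  intros n. unfold dyadic_weight. destruct excluded_middle_informative; [contradiction|ring].
Qed.

Lemma dyadic_mass_full : dyadic_mass (fun _ => True) = 1.
Proof.
  apply is_series_unique. eapply is_series_ext; [|exact is_series_half_pow].
  intros n. unfold dyadic_weight. destruct excluded_middle_informative; tauto.
Qed.

Lemma dyadic_mass_range A : 0 <= dyadic_mass A <= 1.
Proof.
  rewrite <- dyadic_mass_empty, <- dyadic_mass_full at 1.
  split; apply Series_le; auto using ex_series_dyadic_weight;
    intros n; unfold dyadic_weight; pose proof (half_pow_pos (S n));
    repeat destruct excluded_middle_informative; tauto || lra.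
Qed.

Lemma dyadic_mass_disjoint_union A B : (forall n, ~ (A n /\ B n)) ->
  dyadic_mass (fun n => A n \/ B n) = dyadic_mass A + dyadic_mass B.
Proof.
  intros Hdisj. unfold dyadic_mass. rewrite <- Series_plus by apply ex_series_dyadic_weight.
  apply Series_ext. intros n. unfold dyadic_weight.
  specialize (Hdisj n). repeat destruct excluded_middle_informative; tauto || ring.
Qed.

(* Greedy binary expansion: [binary_rem x n] is what is left of [x] after [n] digits. *)
Fixpoint binary_rem (x : R) (n : nat) : R :=
  match n with
  | O => x
  | S k => if Rle_dec ((1/2)^(S k)) (binary_rem x k)
           then binary_rem x k - (1/2)^(S k) else binary_rem x k
  end.

Definition binary_digit (x : R) (n : nat) : Prop := (1/2)^(S n) <= binary_rem x n.

Lemma binary_rem_S x n : binary_rem x (S n) = binary_rem x n - dyadic_weight (binary_digit x) n.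
Proof.
  unfold dyadic_weight, binary_digit. simpl binary_rem.
  destruct Rle_dec, excluded_middle_informative; tauto || lra.
Qed.

Lemma binary_rem_range x n : 0 <= x <= 1 -> 0 <= binary_rem x n <= (1/2)^n.
Proof.
  intros Hx. induction n as [|n IH]; simpl; [lra|].
  destruct Rle_dec; simpl in *; lra.
Qed.

Lemma sum_n_binary_digits x n :
  sum_n (dyadic_weight (binary_digit x)) n = x - binary_rem x (S n).
Proof.
  induction n as [|n IH].
  - rewrite sum_O, binary_rem_S. simpl. ring.
  - rewrite sum_Sn, IH, (binary_rem_S x (S n)). unfold plus; simpl. ring.
Qed.

Lemma dyadic_mass_binary_digit x : 0 <= x <= 1 -> dyadic_mass (binary_digit x) = x.
Proof.
  intros Hx. apply is_series_unique.
  change (is_lim_seq (sum_n (dyadic_weight (binary_digit x))) (Finite x)).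
  apply is_lim_seq_le_le with (u := fun n => x - (1/2)^(S n)) (w := fun _ => x).
  - intros n. rewrite sum_n_binary_digits. pose proof (binary_rem_range x (S n) Hx). lra.
  - replace (Finite x) with (Rbar_minus x 0) by (simpl; f_equal; ring).
    apply is_lim_seq_minus'; [apply is_lim_seq_const|].
    apply (is_lim_seq_incr_1 (fun n => (1/2)^n)), is_lim_seq_geom.
    rewrite Rabs_pos_eq; lra.
  - apply is_lim_seq_const.
Qed.

Lemma binary_digit_1 n : binary_digit 1 n.
Proof.
  assert (Hrem : forall k, binary_rem 1 k = (1/2)^k).
  { induction k as [|k IH]; simpl; [reflexivity|]. rewrite IH.
    destruct Rle_dec as [_|Hnot]; [field|].
    exfalso. apply Hnot. pose proof (half_pow_pos k). simpl. lra. }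
  unfold binary_digit. rewrite Hrem. pose proof (half_pow_pos n). simpl. lra.
Qed.

Lemma not_binary_digit_0 n : ~ binary_digit 0 n.
Proof.
  assert (Hrem : forall k, binary_rem 0 k = 0).
  { induction k as [|k IH]; simpl; [reflexivity|]. rewrite IH.
    destruct Rle_dec as [Hle|_]; [|reflexivity].
    exfalso. pose proof (half_pow_pos (S k)). simpl in *. lra. }
  unfold binary_digit. rewrite Hrem. pose proof (half_pow_pos (S n)). lra.
Qed.

End DyadicMass.

Definition exact_additive_representation {P : Type} (T F : P) (pref : prefrel P) : Prop :=
  exists (Omega : Type) (t : form P -> Omega -> Prop)
    (Sigma : (Omega -> Prop) -> Prop) (lam : (Omega -> Prop) -> R),
    subjective_model T F t Sigma lam /\ exact T F t /\ additive Sigma lam /\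
    represents pref (fun phi => lam (t phi)).

Definition sound_representation {P : Type} (T F : P) (pref : prefrel P) : Prop :=
  exists (Omega : Type) (t : form P -> Omega -> Prop)
    (Sigma : (Omega -> Prop) -> Prop) (lam : (Omega -> Prop) -> R),
    subjective_model T F t Sigma lam /\ sound T F t /\
    represents pref (fun phi => lam (t phi)).

Section Models.
Context {P : Type} (T F : P) (pref : prefrel P).

Lemma is_field_full (Omega : Type) : is_field (fun _ : Omega -> Prop => True).
Proof. repeat split. Qed.

Lemma subjective_model_utility_representation (Omega : Type) (t : form P -> Omega -> Prop)
  (Sigma : (Omega -> Prop) -> Prop) (lam : (Omega -> Prop) -> R) :
  subjective_model T F t Sigma lam -> exact T F t -> represents pref (fun phi => lam (t phi)) ->
  utility_representation T F pref (fun phi => lam (t phi)).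
Proof.
  intros [[HT HF] [[_ [Hrange [H0 H1]]] HSigma]] Hexact Hrep. split.
  - rewrite HT. exact H1.
  - rewrite HF. exact H0.
  - intros phi. apply Hrange, HSigma.
  - intros phi psi Hequiv. rewrite (Hexact phi psi Hequiv). reflexivity.
  - exact Hrep.
Qed.

Lemma utility_exact_additive_representation u :
  utility_representation T F pref u -> exact_additive_representation T F pref.
Proof.
  intros [HT HF Hrange Hequiv Hrep].
  exists nat, (fun phi => binary_digit (u phi)), (fun _ => True), dyadic_mass.
  split; [|split; [|split]].
  - split; [split|split; [split; [apply is_field_full|]|]].
    + apply functional_extensionality. intros n. apply propositional_extensionality.
      rewrite HT. unfold setT. split; auto using binary_digit_1.
    + apply functional_extensionality. intros n. apply propositional_extensionality.
      rewrite HF. unfold set0. split; [apply not_binary_digit_0|contradiction].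
    + split; [intros A _; apply dyadic_mass_range|].
      split; [apply dyadic_mass_empty|apply dyadic_mass_full].
    + auto.
  - intros phi psi Hphipsi. rewrite (Hequiv phi psi Hphipsi). reflexivity.
  - intros A B _ _. apply dyadic_mass_disjoint_union.
  - replace (fun phi => dyadic_mass (binary_digit (u phi))) with u; [exact Hrep|].
    apply functional_extensionality. intros phi. symmetry. apply dyadic_mass_binary_digit, Hrange.
Qed.

Definition valuation : Type := {v : P -> bool | v T = true /\ v F = false}.

Definition truth_set (phi : form P) : valuation -> Prop :=
  fun w => eval (proj1_sig w) phi = true.

Lemma truth_set_injective phi psi : truth_set phi = truth_set psi -> equivf T F phi psi.
Proof.
  intros E. split; intros v HvT HvF; set (w := exist _ v (conj HvT HvF) : valuation).
  - change (truth_set phi w -> truth_set psi w). rewrite E. auto.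
  - change (truth_set psi w -> truth_set phi w). rewrite E. auto.
Qed.

Lemma truth_set_sound : sound T F truth_set.
Proof.
  split; [|split; [|split]].
  - intros phi psi [Hphipsi Hpsiphi]. apply functional_extensionality. intros [v [HvT HvF]].
    apply propositional_extensionality. unfold truth_set; simpl. split; auto.
  - intros phi psi Hphipsi [v [HvT HvF]]. unfold truth_set; simpl. auto.
  - intros phi. apply functional_extensionality. intros w. apply propositional_extensionality.
    unfold truth_set; simpl. destruct (eval (proj1_sig w) phi); simpl; intuition discriminate.
  - intros phi psi. apply functional_extensionality. intros w. apply propositional_extensionality.
    apply Bool.andb_true_iff.
Qed.

Lemma truth_set_valuation : truth_valuation T F truth_set.
Proof.
  split; apply functional_extensionality; intros [v [HvT HvF]]; apply propositional_extensionality;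
    unfold truth_set, setT, set0; simpl; [rewrite HvT|rewrite HvF]; intuition discriminate.
Qed.

(* Only the values on truth sets matter; [0] elsewhere is arbitrary. *)
Definition truth_set_likelihood (u : form P -> R) (A : valuation -> Prop) : R :=
  match excluded_middle_informative (exists phi, A = truth_set phi) with
  | left H => u (proj1_sig (constructive_indefinite_description _ H))
  | right _ => 0
  end.

Lemma truth_set_likelihood_truth_set u phi :
  (forall phi psi, equivf T F phi psi -> u phi = u psi) ->
  truth_set_likelihood u (truth_set phi) = u phi.
Proof.
  intros Hequiv. unfold truth_set_likelihood. destruct excluded_middle_informative as [H|H].
  - destruct constructive_indefinite_description as [psi Hpsi]; simpl.
    apply Hequiv, truth_set_injective. symmetry. exact Hpsi.
  - exfalso. apply H. exists phi. reflexivity.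
Qed.

Lemma utility_sound_representation u :
  utility_representation T F pref u -> sound_representation T F pref.
Proof.
  intros [HT HF Hrange Hequiv Hrep].
  pose proof truth_set_valuation as [HsetT Hset0].
  exists valuation, truth_set, (fun _ => True), (truth_set_likelihood u).
  split; [|split; [exact truth_set_sound|]].
  - split; [exact truth_set_valuation|split; [split; [apply is_field_full|split]|auto]].
    + intros A _. unfold truth_set_likelihood. destruct excluded_middle_informative; [apply Hrange|lra].
    + rewrite <- Hset0, <- HsetT, !truth_set_likelihood_truth_set; auto.
  - replace (fun phi => truth_set_likelihood u (truth_set phi)) with u; [exact Hrep|].
    apply functional_extensionality. intros phi. symmetry. apply truth_set_likelihood_truth_set, Hequiv.
Qed.

End Models.

Section Equivalences.
Context {P : Type} (T F : P) (pref : prefrel P).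

Lemma axioms_iff_utility_representation :
  non_triviality T F pref /\ objective_EU pref /\ equivalence_ax T F pref <->
  exists u, utility_representation T F pref u.
Proof.
  split; [apply axioms_utility_representation|].
  intros [u Hu]. exact (utility_representation_axioms T F pref u Hu).
Qed.

Lemma exact_additive_representation_iff :
  exact_additive_representation T F pref <-> exists u, utility_representation T F pref u.
Proof.
  split.
  - intros (Omega & t & Sigma & lam & Hmodel & Hexact & _ & Hrep).
    eexists. exact (subjective_model_utility_representation T F pref _ t Sigma lam Hmodel Hexact Hrep).
  - intros [u Hu]. exact (utility_exact_additive_representation T F pref u Hu).
Qed.

Lemma sound_representation_iff :
  sound_representation T F pref <-> exists u, utility_representation T F pref u.
Proof.
  split.
  - intros (Omega & t & Sigma & lam & Hmodel & [Hexact _] & Hrep).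
    eexists. exact (subjective_model_utility_representation T F pref _ t Sigma lam Hmodel Hexact Hrep).
  - intros [u Hu]. exact (utility_sound_representation T F pref u Hu).
Qed.

End Equivalences.

Theorem proposition2 (P : Type) (T F : P) (hTF : T <> F)
  (pref : (form P -> R) -> (form P -> R) -> Prop) :
  ((non_triviality T F pref /\ objective_EU pref /\ equivalence_ax T F pref)
   <->
   (exists (Omega : Type) (t : form P -> Omega -> Prop)
      (Sigma : (Omega -> Prop) -> Prop) (lam : (Omega -> Prop) -> R),
      subjective_model T F t Sigma lam /\ exact T F t /\ additive Sigma lam /\
      represents pref (fun phi => lam (t phi))))
  /\
  ((exists (Omega : Type) (t : form P -> Omega -> Prop)
      (Sigma : (Omega -> Prop) -> Prop) (lam : (Omega -> Prop) -> R),
      subjective_model T F t Sigma lam /\ exact T F t /\ additive Sigma lam /\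
      represents pref (fun phi => lam (t phi)))
   <->
   (exists (Omega' : Type) (t' : form P -> Omega' -> Prop)
      (Sigma' : (Omega' -> Prop) -> Prop) (lam' : (Omega' -> Prop) -> R),
      subjective_model T F t' Sigma' lam' /\ sound T F t' /\
      represents pref (fun phi => lam' (t' phi)))).
Proof.
  pose proof (axioms_iff_utility_representation T F pref) as Haxioms.
  pose proof (exact_additive_representation_iff T F pref) as Hexact.
  pose proof (sound_representation_iff T F pref) as Hsound.
  unfold exact_additive_representation, sound_representation in *.
  tauto.
Qed.
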